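(* For each $m\in\mathbb Z_{\ge1}$, \[\sum_{\ell=0}^{\lfloor m/2\rfloor}\binom{2\ell}{\ell}\sum_{1\le i_1<\cdots<i_{m-2\ell}\le m}\ \prod_{j=1}^{m-2\ell}(x_{i_j}+x_{i_j}^{-1})=\sum_{j=0}^{\lfloor m/2\rfloor}\chi^{\operatorname{Sp}(2m)}_{(1^{m-2j})},\] and \[\prod_{i=1}^m(x_i+x_i^{-1})=\sum_{j=0}^{\lfloor m/2\rfloor}(-1)^j\chi^{\operatorname{Sp}(2m)}_{(1^{m-2j})}.\]
   Context: $\chi_\lambda^{\operatorname{Sp}(2m)}=\chi_\lambda^{\operatorname{Sp}(2m)}(x_1^{\pm1},\dots,x_m^{\pm1})$ is the character of the irreducible representation of $\operatorname{Sp}(2m,\mathbb C)$ with highest weight the partition $\lambda$, evaluated at a torus element with eigenvalues $x_1^{\pm1},\dots,x_m^{\pm1}$; $(1^k)$ is the partition with $k$ parts equal to $1$, and $\chi_{(1^0)}=1$. The inner sum over $1\le i_1<\cdots<i_k\le m$ is set to be $1$ when $k=0$. *)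

From mathcomp Require Import all_boot all_order all_algebra.
Set Implicit Arguments. Unset Strict Implicit. Unset Printing Implicit Defensive.
Import GRing.Theory.
Local Open Scope ring_scope.

(* Partitions are given as weakly decreasing sequences of parts; the i-th part
   (0-indexed) is nth 0 la i (0 beyond the length). *)
Definition part_one_col (k : nat) : seq nat := nseq k 1%N.

(* Weyl character formula for Sp(2m): for a partition la with at most m parts,
   chi_la(x_1^{+-1},...,x_m^{+-1}) =
     det[ x_j^{la_i+m-i+1} - x_j^{-(la_i+m-i+1)} ]_{i,j} /
     det[ x_j^{m-i+1} - x_j^{-(m-i+1)} ]_{i,j}
   (here with 0-indexed i, the exponent is la_i + m - i). *)
Definition sp_num (F : fieldType) (m : nat) (la : seq nat) (x : 'I_m -> F) : F :=
  \det (\matrix_(i < m, j < m)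
          (x j ^+ (nth 0%N la i + m - i) - (x j ^+ (nth 0%N la i + m - i))^-1)).

Definition sp_den (F : fieldType) (m : nat) (x : 'I_m -> F) : F :=
  \det (\matrix_(i < m, j < m) (x j ^+ (m - i) - (x j ^+ (m - i))^-1)).

Definition sp_char (F : fieldType) (m : nat) (la : seq nat) (x : 'I_m -> F) : F :=
  sp_num la x / sp_den x.

Definition esym_pm (F : fieldType) (m k : nat) (x : 'I_m -> F) : F :=
  \sum_(S : {set 'I_m} | #|S| == k) \prod_(i in S) (x i + (x i)^-1).

From mathcomp Require Import all_boot all_order all_algebra.
From mathcomp Require Import perm ring zify.
Set Implicit Arguments. Unset Strict Implicit. Unset Printing Implicit Defensive.
Import GRing.Theory.
Local Open Scope ring_scope.

(* Put y = x + x^-1 and let U_d be the Chebyshev polynomials of the second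
   kind, so that (x - x^-1) U_d(y) = x^(d+1) - x^-(d+1).  The Weyl numerator of
   chi_(1^k) is then, up to a factor independent of k, the minor M_(m-k) of the
   matrix [U_d(y_j)] (0 <= d <= m, j < m) obtained by deleting the row m - k.
   Expanding det [U_d(X) | U_d(y_j)] along its first column and factoring it
   through the Vandermonde determinant of (X, y_1, ..., y_m) gives
       sum_d (-1)^d M_d U_d(X) = M_m prod_j (y_j - X).
   The constant coefficient of this identity is the second formula, because
   U_d(0) = (-1)^(d/2) for even d and 0 for odd d.  Applying the functional
   p |-> (constant term of p(x + x^-1)), which maps U_d to [d even] and X^k to
   binom(k, k/2) [k even], gives the first. *)

Lemma nat_ind2 (P : nat -> Prop) :
  P 0%N -> P 1%N -> (forall n, P n -> P n.+1 -> P n.+2) -> forall n, P n.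
Proof.
move=> P0 P1 PSS n; suff: P n /\ P n.+1 by case.
by elim: n => [|n [Pn Pn1]]; split=> //; apply: PSS.
Qed.

Section EvenSums.
Variable V : nmodType.

Lemma sum_ord_even (f : nat -> V) n :
  \sum_(i < n.+1) (if odd i then 0 else f i) = \sum_(l < n./2.+1) f l.*2.
Proof.
elim: n => [|n IH]; first by rewrite !big_ord1.
rewrite big_ord_recr /= IH.
have := odd_double_half n; rewrite uphalf_half -!muln2.
case: (odd n) => /= hn; last by rewrite addr0 add0n.
by rewrite add1n [RHS]big_ord_recr /= -muln2; congr (_ + f _); lia.
Qed.

Lemma sum_ord_double_eq (h : nat -> V) i :
  \sum_(k < i.+1) (if i == k.*2 then h k else 0) = if odd i then 0 else h i./2.
Proof.
case odd_i: (odd i).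
  by rewrite big1 // => k _; case: eqP => // i2k; rewrite i2k odd_double in odd_i.
have half_lt : (i./2 < i.+1)%N by rewrite ltnS -divn2 leq_div.
rewrite (bigD1 (Ordinal half_lt)) //= big1 ?addr0.
  by rewrite -{1}(odd_double_half i) odd_i add0n eqxx.
move=> k /eqP k_neq; case: eqP => // i2k; exfalso; apply: k_neq.
by apply: val_inj; rewrite /= [in RHS]i2k doubleK.
Qed.

End EvenSums.

Section Chebyshev.
Variable R : comNzRingType.

Fixpoint chebU (d : nat) : {poly R} :=
  match d with
  | 0 => 1
  | 1 => 'X
  | (d'.+1 as d1).+1 => 'X * chebU d1 - chebU d'
  end.

Lemma chebUSS d : chebU d.+2 = 'X * chebU d.+1 - chebU d.
Proof. by []. Qed.

Lemma size_chebU_monic d : size (chebU d) = d.+1 /\ chebU d \is monic.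
Proof.
elim/nat_ind2: d => [||d [size_d _] [size_d1 monic_d1]].
- by rewrite size_poly1 monic1.
- by rewrite size_polyX monicX.
have size_Xd1 : size ('X * chebU d.+1) = d.+3.
  by rewrite mulrC size_mulX ?monic_neq0 ?size_d1.
have size_lt : (size (- chebU d) < size ('X * chebU d.+1)%R)%N.
  by rewrite size_polyN size_d size_Xd1.
split; first by rewrite chebUSS size_polyDl.
apply/monicP; rewrite chebUSS lead_coefDl // mulrC lead_coefMX; exact/monicP.
Qed.

Lemma size_chebU d : size (chebU d) = d.+1.
Proof. exact: (size_chebU_monic d).1. Qed.

Lemma coef_chebU_deg d : (chebU d)`_d = 1.
Proof. by have /monicP := (size_chebU_monic d).2; rewrite lead_coefE size_chebU. Qed.

Lemma coef_chebU_gt d i : (d < i)%N -> (chebU d)`_i = 0.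
Proof. by move=> lt_di; rewrite nth_default // size_chebU. Qed.

Lemma coef0_chebU d : (chebU d)`_0 = if odd d then 0 else (-1) ^+ d./2.
Proof.
elim/nat_ind2: d => [||d IHd _]; [by rewrite coefC | by rewrite coefX |].
rewrite chebUSS coefB coefXM /= IHd.
by case: (odd d) => /=; rewrite ?subr0 ?sub0r ?oppr0 // exprS mulN1r.
Qed.

End Chebyshev.

Lemma horner_chebU_addV (F : fieldType) (x : F) d : x != 0 ->
  (x - x^-1) * (chebU F d).[x + x^-1] = x ^+ d.+1 - (x ^+ d.+1)^-1.
Proof.
move=> x_neq0; have xV : x * x^-1 = 1 by rewrite mulfV.
elim/nat_ind2: d => [||d IHd IHd1].
- by rewrite hornerC mulr1 expr1.
- rewrite hornerX -exprVn !expr2; ring: xV.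
rewrite chebUSS hornerD hornerN hornerM hornerX mulrDr mulrN mulrCA IHd1 IHd.
rewrite -!exprVn !exprS; ring: xV.
Qed.

Section Vieta.
Variable R : comNzRingType.
Variables (m : nat) (y : 'I_m -> R).

Lemma coef_prod_XsubC_ord k : (k <= m)%N ->
  (\prod_(i < m) ('X - (y i)%:P))`_k =
  (-1) ^+ (m - k) * \sum_(S : {set 'I_m} | #|S| == (m - k)%N) \prod_(i in S) y i.
Proof.
pose ps := [seq y i | i <- enum 'I_m].
have nth_ps (i : 'I_m) : ps`_i = y i.
  by rewrite (nth_map i) ?nth_ord_enum // size_enum_ord.
have <- : \prod_(p <- ps) ('X - p%:P) = \prod_(i < m) ('X - (y i)%:P).
  by rewrite big_map big_enum.
have size_ps : size ps = m by rewrite size_map size_enum_ord.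
move=> le_km; rewrite coef_prod_XsubC ?size_ps //.
move: nth_ps; case: (size ps) / (esym size_ps) => nth_ps.
by congr (_ * _); apply: eq_bigr => S _; apply: eq_bigr => i _.
Qed.

Lemma coef_prod_CsubX k : (k <= m)%N ->
  (\prod_(i < m) ((y i)%:P - 'X))`_k =
  (-1) ^+ k * \sum_(S : {set 'I_m} | #|S| == (m - k)%N) \prod_(i in S) y i.
Proof.
move=> le_km.
under eq_bigr do rewrite -opprB.
rewrite prodrN card_ord -(rmorph_sign polyC) coefCM coef_prod_XsubC_ord // mulrA -exprD.
by rewrite -(signr_odd _ (m + _)) oddD oddB // addbA addbb signr_odd.
Qed.

Lemma coef_prod_CsubX_deg : (\prod_(i < m) ((y i)%:P - 'X))`_m = (-1) ^+ m.
Proof.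
rewrite coef_prod_CsubX // subnn (eq_bigl (pred1 set0)) => [|S]; last first.
  by rewrite /= cards_eq0.
by rewrite big_pred1_eq big_set0 mulr1.
Qed.

End Vieta.

Section ConstantTerm.
Variable R : comNzRingType.

(* The constant term of (x + x^-1)^i. *)
Definition sym_moment (i : nat) : R := if odd i then 0 else 'C(i, i./2)%:R.

Lemma coef_pow_1addX2 i : ((1 + 'X ^+ 2 : {poly R}) ^+ i)`_i = sym_moment i.
Proof.
rewrite /sym_moment addrC exprD1n coef_sum -(sum_ord_double_eq (fun k => 'C(i, k)%:R)).
apply: eq_bigr => k _; rewrite coefMn -exprM coefXn mul2n.
by case: eqP; rewrite ?mulr1n ?mul0rn.
Qed.

Lemma sum_coefZ_pairing n (g : nat -> R) I (r : seq I) (c : I -> R)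
    (p : I -> {poly R}) :
  \sum_(k < n) (\sum_(i <- r) c i *: p i)`_k * g k =
  \sum_(i <- r) c i * \sum_(k < n) (p i)`_k * g k.
Proof.
under eq_bigr do rewrite coef_sum mulr_suml.
rewrite exchange_big; apply: eq_bigr => i _; rewrite mulr_sumr.
by apply: eq_bigr => k _; rewrite coefZ mulrA.
Qed.

Variable N : nat.

(* For size p <= N.+1, homog p = 'X^N * p('X + 'X^-1) is a polynomial whose
   coefficient of 'X^N is the constant term of p(x + x^-1). *)
Definition homog (p : {poly R}) : {poly R} :=
  \sum_(i < N.+1) p`_i *: ((1 + 'X ^+ 2) ^+ i * 'X ^+ (N - i)).

Lemma homogB (p q : {poly R}) : homog (p - q) = homog p - homog q.
Proof. by rewrite -sumrB; apply: eq_bigr => i _; rewrite coefB scalerBl. Qed.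

Lemma homog_XM (p : {poly R}) :
  (size p <= N)%N -> 'X * homog ('X * p) = (1 + 'X ^+ 2) * homog p.
Proof.
move=> size_p; rewrite /homog big_ord_recl coefXM /= scale0r add0r.
rewrite [in RHS]big_ord_recr /= (leq_sizeP _ _ size_p) // scale0r addr0.
rewrite !mulr_sumr; apply: eq_bigr => i _; rewrite coefXM /= -!scalerAr.
have XNi : 'X ^+ (N - i) = 'X ^+ (N - i.+1) * 'X :> {poly R}.
  by rewrite -exprSr subnSK.
by rewrite /bump /= add0n add1n XNi exprS; congr (_ *: _); ring.
Qed.

Lemma homog_chebU d : (d <= N)%N ->
  homog (chebU R d) = 'X ^+ (N - d) * \sum_(j < d.+1) 'X ^+ j.*2.
Proof.
have X_lreg : GRing.lreg ('X : {poly R}).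
  by apply: lreg_lead; rewrite lead_coefX; exact: lreg1.
have homog1 : homog 1 = 'X ^+ N.
  rewrite /homog big_ord_recl coefC /= subn0 expr0 mul1r scale1r.
  by rewrite big1 ?addr0 // => i _; rewrite coefC /= scale0r.
elim/nat_ind2: d => [|le_1N|d IHd IHd1 le_d2N].
- by rewrite big_ord1 subn0 mulr1.
- apply: X_lreg; rewrite -[X in homog X]mulr1 homog_XM ?size_poly1 // homog1.
  rewrite big_ord_recr big_ord1 /= -[in LHS](subnKC le_1N) add1n !exprS; ring.
apply: X_lreg; rewrite chebUSS homogB mulrBr homog_XM; last by rewrite size_chebU.
rewrite IHd1 1?ltnW // IHd 2?ltnW // [\sum_(j < d.+3) _]big_ord_recr /=.
rewrite ![\sum_(j < d.+2) _]big_ord_recr /=.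
have -> : (N - d = (N - d.+2).+2)%N by lia.
have -> : (N - d.+1 = (N - d.+2).+1)%N by lia.
rewrite !doubleS !exprS; ring.
Qed.

Lemma coef_homog p : (homog p)`_N = \sum_(i < N.+1) p`_i * sym_moment i.
Proof.
rewrite coef_sum; apply: eq_bigr => i _.
by rewrite coefZ coefMXn ltnNge leq_subr /= subKn ?coef_pow_1addX2 // -ltnS.
Qed.

Lemma sym_moment_chebU d : (d <= N)%N ->
  \sum_(i < N.+1) (chebU R d)`_i * sym_moment i = if odd d then 0 else 1.
Proof.
move=> le_dN; rewrite -coef_homog homog_chebU // coefXnM ltnNge leq_subr /= subKn //.
rewrite coef_sum -(sum_ord_double_eq (fun _ => 1)).
by apply: eq_bigr => k _; rewrite coefXn; case: eqP.
Qed.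

End ConstantTerm.

Section ChebyshevMinors.
Variable R : comNzRingType.
Variables (m : nat) (y : 'I_m -> R).

Definition chebU_minor (d : nat) : R :=
  \det (\matrix_(i < m, j < m) (chebU R (bump d i)).[y j]).

Let nodes : 'rV[{poly R}]_m.+1 :=
  \row_j if unlift ord0 j is Some j' then (y j')%:P else 'X.

Let chebU_coefs : 'M[{poly R}]_m.+1 := \matrix_(d, k) ((chebU R d)`_k)%:P.

Let chebU_nodes := chebU_coefs *m Vandermonde m.+1 nodes.

Lemma det_chebU_coefs : \det chebU_coefs = 1.
Proof.
rewrite det_trig; last by apply/is_trig_mxP => d k lt_dk; rewrite mxE coef_chebU_gt.
by rewrite big1 // => d _; rewrite mxE coef_chebU_deg.
Qed.

Lemma chebU_nodes_col0 (d : 'I_m.+1) : chebU_nodes d 0 = chebU R d.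
Proof.
rewrite mxE; under eq_bigr do rewrite !mxE unlift_none mul_polyC.
apply/polyP => i; rewrite coef_sumMXn big_ord1_eq.
by case: ltnP => // lt_mi; rewrite coef_chebU_gt // (leq_trans (ltn_ord d)).
Qed.

Lemma chebU_nodes_lift (d : 'I_m.+1) j :
  chebU_nodes d (lift 0 j) = ((chebU R d).[y j])%:P.
Proof.
rewrite mxE (@horner_coef_wide _ m.+1) ?size_chebU // rmorph_sum.
by apply: eq_bigr => k _; rewrite !mxE liftK rmorphM rmorphXn.
Qed.

Lemma det_Vandermonde_nodes :
  \det (Vandermonde m.+1 nodes) =
  (\prod_(i < m) \prod_(j < m | (i < j)%N) (y j - y i)) *: \prod_(i < m) ((y i)%:P - 'X).
Proof.
rewrite det_Vandermonde big_ord_recl -mul_polyC mulrC rmorph_prod /nodes; congr (_ * _).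
  apply: eq_bigr => i _; rewrite rmorph_prod big_mkcond big_ord_recl /= mul1r.
  rewrite [RHS]big_mkcond; apply: eq_bigr => j _; rewrite /bump /= !add1n ltnS.
  by case: ifP; rewrite // !mxE !liftK rmorphB.
rewrite big_mkcond big_ord_recl /= big_mkcond /=.
by rewrite mul1r; apply: eq_bigr => j _; rewrite !mxE liftK unlift_none.
Qed.

Lemma det_chebU_nodes :
  \det chebU_nodes = \sum_(d < m.+1) ((-1) ^+ d * chebU_minor d) *: chebU R d.
Proof.
rewrite (expand_det_col _ 0); apply: eq_bigr => d _.
rewrite chebU_nodes_col0 /cofactor addn0 -mul_polyC mulrC rmorphM rmorph_sign.
rewrite /chebU_minor -det_map_mx; congr (_ * \det _ * _).
by apply/matrixP => i j; rewrite [LHS]mxE [LHS]mxE chebU_nodes_lift !mxE.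
Qed.

Lemma chebU_minor_expansion :
  \sum_(d < m.+1) ((-1) ^+ d * chebU_minor d) *: chebU R d =
  chebU_minor m *: \prod_(i < m) ((y i)%:P - 'X).
Proof.
have := det_chebU_nodes; rewrite det_mulmx det_chebU_coefs mul1r.
rewrite det_Vandermonde_nodes; set c := \prod_(i < m) _; move=> expansion.
suff -> : chebU_minor m = c by rewrite -expansion.
have := congr1 (fun p : {poly R} => p`_m) expansion; rewrite coefZ coef_prod_CsubX_deg.
rewrite coef_sum (bigD1 ord_max) //= big1 ?addr0 => [|d /eqP d_neq_m]; last first.
  rewrite coefZ coef_chebU_gt ?mulr0 // ltn_neqAle -ltnS ltn_ord andbT.
  by apply/eqP => d_m; apply: d_neq_m; apply: val_inj.
by rewrite coefZ coef_chebU_deg mulr1 mulrC => /(can_inj (signrMK m)) ->.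
Qed.

Lemma prod_mul_chebU_minor :
  \prod_(i < m) y i * chebU_minor m =
  \sum_(j < m./2.+1) (-1) ^+ j * chebU_minor j.*2.
Proof.
have := congr1 (fun p : {poly R} => p`_0) chebU_minor_expansion.
rewrite coefZ coef0_prod coef_sum.
under [in RHS]eq_bigr do rewrite coefB coefC coefX subr0.
rewrite (eq_bigr (fun d : 'I_m.+1 => if odd d then 0 else (-1) ^+ d./2 * chebU_minor d)).
  rewrite (sum_ord_even (fun d => (-1) ^+ d./2 * chebU_minor d)) mulrC => <-.
  by apply: eq_bigr => j _; rewrite doubleK.
move=> d _; rewrite coefZ coef0_chebU; case: ifP => odd_d; first by rewrite mulr0.
by rewrite -signr_odd odd_d mul1r mulrC.
Qed.

Lemma mul_chebU_minor_sum_esym :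
  chebU_minor m *
    \sum_(l < m./2.+1) 'C(l.*2, l)%:R *
      \sum_(S : {set 'I_m} | #|S| == (m - l.*2)%N) \prod_(i in S) y i =
  \sum_(j < m./2.+1) chebU_minor j.*2.
Proof.
have := congr1 (fun p : {poly R} => \sum_(k < m.+1) p`_k * sym_moment R k)
  chebU_minor_expansion.
rewrite sum_coefZ_pairing.
rewrite (eq_bigr (fun d : 'I_m.+1 => if odd d then 0 else chebU_minor d)); last first.
  move=> d _; rewrite sym_moment_chebU ?leq_ord //.
  by case: ifP => odd_d; rewrite ?mulr0 // -signr_odd odd_d mulr1 mul1r.
rewrite sum_ord_even => ->.
under [RHS]eq_bigr do rewrite coefZ -mulrA; rewrite -mulr_sumr; congr (_ * _).
rewrite [RHS](eq_bigr (fun k : 'I_m.+1 => if odd k then 0 else 'C(k, k./2)%:R *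
    \sum_(S : {set 'I_m} | #|S| == (m - k)%N) \prod_(i in S) y i)); last first.
  move=> k _; rewrite coef_prod_CsubX ?leq_ord // /sym_moment.
  by case: ifP => odd_k; rewrite ?mulr0 // -signr_odd odd_k mul1r mulrC.
rewrite (sum_ord_even (fun k => 'C(k, k./2)%:R *
  \sum_(S : {set 'I_m} | #|S| == (m - k)%N) \prod_(i in S) y i)).
by apply: eq_bigr => l _; rewrite doubleK.
Qed.

End ChebyshevMinors.

Section SymplecticColumnCharacters.
Variables (F : fieldType) (m : nat) (x : 'I_m -> F).
Hypothesis x_neq0 : forall i, x i != 0.

Let y i := x i + (x i)^-1.

Lemma sp_num_one_col k :
  sp_num (part_one_col k) x =
  (-1) ^+ perm (@rev_ord_inj m) * chebU_minor y (m - k) * \prod_j (x j - (x j)^-1).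
Proof.
have -> : \prod_j (x j - (x j)^-1) = \det (diag_mx (\row_j (x j - (x j)^-1))).
  by rewrite det_diag; apply: eq_bigr => j _; rewrite mxE.
rewrite /sp_num -det_perm -!det_mulmx -row_permE mul_mx_diag.
congr (\det _); apply/matrixP => i j; rewrite !mxE permE /= nth_nseq mulrC.
have -> : ((if (i < k)%N then 1 else 0) + m - i = (bump (m - k) (m - i.+1)).+1)%N.
  have := ltn_ord i; rewrite /bump.
  by case: (ltnP i k); case: (leqP (m - k) (m - i.+1)) => /=; lia.
by rewrite horner_chebU_addV.
Qed.

Lemma sp_den_eq_sp_num0 : sp_den x = sp_num (part_one_col 0) x.
Proof.
rewrite /sp_den /sp_num; congr (\det _).
by apply/matrixP => i j; rewrite !mxE nth_nil add0n.
Qed.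

Lemma chebU_minor_neq0 : sp_den x != 0 -> chebU_minor y m != 0.
Proof.
by rewrite sp_den_eq_sp_num0 sp_num_one_col subn0 !mulf_eq0 !negb_or => /andP[/andP[]].
Qed.

Lemma sp_char_one_col k : sp_den x != 0 ->
  sp_char (part_one_col k) x = chebU_minor y (m - k) / chebU_minor y m.
Proof.
move=> den_neq0; rewrite /sp_char sp_den_eq_sp_num0 !sp_num_one_col subn0.
move: den_neq0; rewrite sp_den_eq_sp_num0 sp_num_one_col subn0 !mulf_eq0 !negb_or.
case/andP=> /andP[sign_neq0 _] prod_neq0.
set s := (-1) ^+ _; set P := \prod_j _.
by rewrite (mulrAC s _ P) (mulrAC s _ P) invfM mulrACA divff ?mul1r // mulf_neq0.
Qed.

End SymplecticColumnCharacters.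

Theorem mainTheorem3 (F : fieldType) (m : nat) (x : 'I_m -> F) :
  (0 < m)%N ->
  (forall i, x i != 0) ->
  sp_den x != 0 ->
  (\sum_(0 <= l < (m./2).+1)
      ('C(l.*2, l))%:R * esym_pm (m - l.*2) x
    = \sum_(0 <= j < (m./2).+1) sp_char (part_one_col (m - j.*2)) x)
  /\
  (\prod_(i < m) (x i + (x i)^-1)
    = \sum_(0 <= j < (m./2).+1) (-1) ^+ j * sp_char (part_one_col (m - j.*2)) x).
Proof.
(* The identities also hold for m = 0. *)
move=> _ x_neq0 den_neq0.
set y := fun i => x i + (x i)^-1.
have minor_neq0 := chebU_minor_neq0 x_neq0 den_neq0.
have char_eq (j : 'I_(m./2).+1) :
    sp_char (part_one_col (m - j.*2)) x = chebU_minor y j.*2 / chebU_minor y m.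
  by rewrite sp_char_one_col // subKn // -geq_half_double -ltnS.
rewrite !big_mkord; split.
  under [RHS]eq_bigr do rewrite char_eq.
  by rewrite -mulr_suml -mul_chebU_minor_sum_esym mulrC mulKf.
under [RHS]eq_bigr do rewrite char_eq mulrA.
by rewrite -mulr_suml -prod_mul_chebU_minor mulfK.
Qed.
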